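(* Any PUT operation $O$ by client $c$ writing key $k$ of partition $p$ at time $t$ with dependency timestamp $dt = dt_w$ satisfies per-key monotonic-write consistency: for every server $s$ and every time $t'$ such that $CommittedWrites(s,k,t')$ includes $O$, no client accessing $s$ (at or after $t'$) reads a value of $k$ written by a write $w\neq O$ with $w\in ClientWrites(c,k,t)$.
   Context: System model. Data is replicated in $D$ datacenters and split into $P$ partitions. In each datacenter $d$, each partition is replicated by a Raft group with a leader $L_d$; Raft guarantees that all members of a group commit the same totally ordered sequence of log entries, each with a log index, in increasing index order. Every version $v$ of a key carries a value, an originating datacenter $v.dc\_id$, the log index $idx(v)$ it received in the Raft log of its originating datacenter, and a hybrid logical clock (HLC) timestamp $v.t=\langle l,c\rangle$; HLC timestamps are compared lexicographically. Writes committed in the group of datacenter $d$ that originated at $d$ are forwarded, in commit order, over FIFO channels to the leaders of the same partition in every other datacenter, which append them (carrying their original index $idx(v)$) to their own Raft logs. Each server $s$ keeps a vector $sv$ of length $D$, initially zero; when $s$ commits a version $v$ it sets $sv[v.dc\_id]:=idx(v)$ and adds $v$ to the version chain of its key. Client protocol. Each client $c$ keeps $D\times P$ matrices $hrm$ (highest read) and $hwm$ (highest write), initially zero, and HLC timestamps $dt_r,dt_w$, initially zero. GET of key $k$ in partition $p$: the client sends vectors $hrv,hwv$ of length $D$ (each either the zero vector or $hrm[:,p]$, resp. $hwm[:,p]$); the server blocks while there is $i$ with $sv[i]<hrv[i]$ or $sv[i]<hwv[i]$; it then returns the version $v$ of $k$ in its version chain with the largest timestamp, together with $v.dc\_id$,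 $sv[v.dc\_id]$ and $v.t$; the client sets $hrm[v.dc\_id,p]:=\max(hrm[v.dc\_id,p],sv[v.dc\_id])$ and $dt_r:=\max(dt_r,v.t)$. PUT of key $k$ in partition $p$ at leader $L_d$: the client sends a dependency timestamp $dt$ (one of $0$, $dt_r$, $dt_w$, $\max(dt_r,dt_w)$); the leader updates its HLC $\langle l,c\rangle$ with $dt$ by the rule: $l':=l$; $l:=\max(l',pt,dt.l)$ where $pt$ is its physical clock; then $c:=\max(c,dt.c)+1$ if $l=l'=dt.l$, else $c:=c+1$ if $l=l'$, else $c:=dt.c+1$ if $l=dt.l$, else $c:=0$; it timestamps the new version with the updated HLC value $t$ and $dc\_id=d$, appends it to the Raft log, and after commit replies with $d$, $sv[d]$ and $t$; the client sets $hwm[d,p]:=\max(hwm[d,p],sv[d])$ and $dt_w:=\max(dt_w,t)$. Definitions. $CommittedWrites(s,k,t)$ is the ordered sequence of all writes of key $k$ committed at server $s$ by time $t$; $ClientWrites(c,k,t)$ is the ordered sequence of all writes of $k$ done by client $c$ by time $t$; $ClientReads(c,k,t)$ is the set of writes whose value of $k$ has been read by client $c$ by time $t$. *)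

From HB Require Import structures.
From mathcomp Require Import all_boot.
Set Implicit Arguments. Unset Strict Implicit. Unset Printing Implicit Defensive.

(* HLC timestamps <l, c>, compared lexicographically. *)
Definition ts := (nat * nat)%type.
Definition tsle (a b : ts) : bool := (a.1 < b.1) || ((a.1 == b.1) && (a.2 <= b.2)).
Definition tsmax (a b : ts) : ts := if tsle a b then b else a.
Definition ts0 : ts := (0, 0).

(* HLC update of clock [cur] with physical time [pt] and dependency [dt]. *)
Definition hlc_update (cur : ts) (pt : nat) (dt : ts) : ts :=
  let l' := cur.1 in
  let l := maxn (maxn l' pt) dt.1 in
  let c := if (l == l') && (l == dt.1) then (maxn cur.2 dt.2).+1
           else if l == l' then cur.2.+1
           else if l == dt.1 then dt.2.+1
           else 0 in
  (l, c).

(* A version: key, value, originating datacenter, index in the Raft log of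
   its originating datacenter, HLC timestamp. *)
Record version (D : nat) := Version {
  vkey : nat; vval : nat; vdc : 'I_D; vidx : nat; vts : ts }.

Definition v2t D (v : version D) := (vkey v, vval v, vdc v, vidx v, vts v).
Definition t2v D (x : nat * nat * 'I_D * nat * ts) : version D :=
  let: (k, x, d, i, t) := x in Version k x d i t.
Lemma v2tK D : cancel (@v2t D) (@t2v D). Proof. by case. Qed.
HB.instance Definition _ D := Equality.copy (version D) (can_type (@v2tK D)).

Inductive depchoice := DepZero | DepR | DepW | DepRW.

Section Model.
Variables (D P R : nat).
Variable part : nat -> 'I_P.

(* Servers: replica r of the Raft group of partition p in datacenter d;
   replica ord0 is the leader L_d of that group. *)
Definition server := ('I_D * 'I_P * 'I_R.+1)%type.
Definition leader (d : 'I_D) (p : 'I_P) : server := (d, p, ord0).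

Record state := mkState {
  logs : 'I_D -> 'I_P -> seq (version D);     (* Raft log of group (d,p) *)
  committed : server -> nat;                  (* number of committed entries *)
  sv : server -> 'I_D -> nat;
  chain : server -> seq (version D);          (* committed versions, commit order *)
  hlc : 'I_D -> 'I_P -> ts;                   (* HLC of leader L_d of partition p *)
  chan : 'I_D -> 'I_D -> 'I_P -> seq (version D); (* FIFO channel d -> d' for p *)
  hrm : nat -> 'I_D -> 'I_P -> nat;
  hwm : nat -> 'I_D -> 'I_P -> nat;
  dtr : nat -> ts;
  dtw : nat -> ts;
  pending : nat -> option (version D)         (* outstanding PUT of a client *)
}.

Definition init : state :=
  mkState (fun _ _ => [::]) (fun _ => 0) (fun _ _ => 0) (fun _ => [::])
          (fun _ _ => ts0) (fun _ _ _ => [::]) (fun _ _ _ => 0) (fun _ _ _ => 0)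
          (fun _ => ts0) (fun _ => ts0) (fun _ => None).

Definition upd (A : eqType) (B : Type) (f : A -> B) (a : A) (b : B) : A -> B :=
  fun x => if x == a then b else f x.

Definition depts (st : state) (c : nat) (ch : depchoice) : ts :=
  match ch with
  | DepZero => ts0
  | DepR => dtr st c
  | DepW => dtw st c
  | DepRW => tsmax (dtr st c) (dtw st c)
  end.

Inductive label :=
  | LPut (c : nat) (v : version D) (ch : depchoice)
  | LReply (c : nat) (v : version D)                   (* leader replies to c's PUT of v *)
  | LCommit (s : server)                               (* s commits next log entry *)
  | LDeliver (d d' : 'I_D) (p : 'I_P)                  (* forwarded entry appended *)
  | LGet (c : nat) (s : server) (k : nat) (r : option (version D))
  | LIdle.

Inductive step : state -> label -> state -> Prop :=
  | step_put st c k x d ch pt :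
      pending st c = None ->
      let p := part k in
      let t := hlc_update (hlc st d p) pt (depts st c ch) in
      let v := Version k x d (size (logs st d p)).+1 t in
      step st (LPut c v ch)
        (mkState (upd (logs st) d (upd (logs st d) p (rcons (logs st d p) v)))
                 (committed st) (sv st) (chain st)
                 (upd (hlc st) d (upd (hlc st d) p t))
                 (chan st) (hrm st) (hwm st) (dtr st) (dtw st)
                 (upd (pending st) c (Some v)))
  | step_reply st c v :
      pending st c = Some v ->
      let d := vdc v in let p := part (vkey v) in
      v \in chain st (leader d p) ->
      step st (LReply c v)
        (mkState (logs st) (committed st) (sv st) (chain st) (hlc st) (chan st)
                 (hrm st)
                 (upd (hwm st) c (upd (hwm st c) d
                    (upd (hwm st c d) p (maxn (hwm st c d p) (sv st (leader d p) d)))))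
                 (dtr st) (upd (dtw st) c (tsmax (dtw st c) (vts v)))
                 (upd (pending st) c None))
  | step_commit st (d : 'I_D) (p : 'I_P) (r : 'I_R.+1) v :
      let s : server := (d, p, r) in
      ohead (drop (committed st s) (logs st d p)) = Some v ->
      let fwd := (r == ord0) && (vdc v == d) in
      step st (LCommit s)
        (mkState (logs st) (upd (committed st) s (committed st s).+1)
                 (upd (sv st) s (upd (sv st s) (vdc v) (vidx v)))
                 (upd (chain st) s (rcons (chain st s) v))
                 (hlc st)
                 (fun d1 d2 p1 => if fwd && (d1 == d) && (d2 != d) && (p1 == p)
                                  then rcons (chan st d1 d2 p1) v
                                  else chan st d1 d2 p1)
                 (hrm st) (hwm st) (dtr st) (dtw st) (pending st))
  | step_deliver st d d' p v rest :
      chan st d d' p = v :: rest ->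
      step st (LDeliver d d' p)
        (mkState (upd (logs st) d' (upd (logs st d') p (rcons (logs st d' p) v)))
                 (committed st) (sv st) (chain st) (hlc st)
                 (upd (chan st) d (upd (chan st d) d' (upd (chan st d d') p rest)))
                 (hrm st) (hwm st) (dtr st) (dtw st) (pending st))
  | step_get_none st c (s : server) k (br bw : bool) :
      pending st c = None ->
      part k = s.1.2 ->
      (forall i, (if br then hrm st c i s.1.2 else 0) <= sv st s i) ->
      (forall i, (if bw then hwm st c i s.1.2 else 0) <= sv st s i) ->
      (forall v', v' \in chain st s -> vkey v' <> k) ->
      step st (LGet c s k None) st
  | step_get_some st c (s : server) k (br bw : bool) v :
      pending st c = None ->
      part k = s.1.2 ->
      (forall i, (if br then hrm st c i s.1.2 else 0) <= sv st s i) ->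
      (forall i, (if bw then hwm st c i s.1.2 else 0) <= sv st s i) ->
      v \in chain st s -> vkey v = k ->
      (forall v', v' \in chain st s -> vkey v' = k -> tsle (vts v') (vts v)) ->
      let p := s.1.2 in let d := vdc v in
      step st (LGet c s k (Some v))
        (mkState (logs st) (committed st) (sv st) (chain st) (hlc st) (chan st)
                 (upd (hrm st) c (upd (hrm st c) d
                    (upd (hrm st c d) p (maxn (hrm st c d p) (sv st s d)))))
                 (hwm st) (upd (dtr st) c (tsmax (dtr st c) (vts v)))
                 (dtw st) (pending st))
  | step_idle st : step st LIdle st.

Definition execution (ex : nat -> state) (lab : nat -> label) : Prop :=
  ex 0 = init /\ forall n, step (ex n) (lab n) (ex n.+1).

Definition CommittedWrites (ex : nat -> state) (s : server) (k t : nat) : seq (version D) :=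
  [seq v <- chain (ex t) s | vkey v == k].

Definition ClientWrites (lab : nat -> label) (c k t : nat) (w : version D) : Prop :=
  exists n ch, n <= t /\ lab n = LPut c w ch /\ vkey w = k.

Definition ReadsAt (lab : nat -> label) (c' : nat) (s : server) (k n : nat)
  (w : version D) : Prop := lab n = LGet c' s k (Some w).

End Model.

(* The version [w] returned by a read is the one with the largest timestamp
   among those committed at the server, so it dominates [O] once [O] is
   committed there.  Conversely, [w] was issued by the same client before [O]
   and had to be acknowledged before the client could issue [O]; the
   acknowledgement raised [dt_w] to at least the timestamp of [w], and the HLC
   update makes the timestamp of [O] strictly larger than [dt_w].  Hence
   [ts(O) <= ts(w) <= dt_w < ts(O)]. *)
From HB Require Import structures.
From mathcomp Require Import all_boot.
From mathcomp Require Import zify.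

Set Implicit Arguments.
Unset Strict Implicit.

Lemma tsle_trans a b c : tsle a b -> tsle b c -> tsle a c.
Proof. by case: a b c => [a1 a2] [b1 b2] [c1 c2]; rewrite /tsle /=; lia. Qed.

Lemma tsle_maxl a b : tsle a (tsmax a b).
Proof. by case: a b => [a1 a2] [b1 b2]; rewrite /tsmax /tsle /=; case: ifP => /=; lia. Qed.

Lemma tsle_maxr a b : tsle b (tsmax a b).
Proof. by case: a b => [a1 a2] [b1 b2]; rewrite /tsmax /tsle /=; case: ifP => /=; lia. Qed.

Lemma hlc_update_gt_dep cur pt dt : ~~ tsle (hlc_update cur pt dt) dt.
Proof.
case: cur dt => [a b] [d e]; rewrite /hlc_update /tsle /=.
by case: ifP => /=; [|case: ifP => /=; [|case: ifP => /=]]; lia.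
Qed.

Section Execution.
Variables (D P R : nat) (part : nat -> 'I_P).
Variables (ex : nat -> state D P R) (lab : nat -> label D P R).
Hypothesis exec : execution part ex lab.

Let step_at n : step part (ex n) (lab n) (ex n.+1).
Proof. by case: exec. Qed.

Lemma chain_monotone s v m n :
  m <= n -> v \in chain (ex m) s -> v \in chain (ex n) s.
Proof.
move=> /subnK <- vm; elim: (n - m) => // j IH; rewrite addSn.
have := step_at (j + m) => st; inversion st; subst => //=; rewrite /upd.
by case: eqP => [<-|_]; rewrite // mem_rcons in_cons IH orbT.
Qed.

Lemma read_latest c' s k n w v :
  lab n = @LGet D P R c' s k (Some w) -> v \in chain (ex n) s -> vkey v = k ->
  tsle (vts v) (vts w).
Proof. by move=> ln; have := step_at n; rewrite ln => st; inversion st; auto. Qed.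

Lemma put_pending c v ch n :
  lab n = @LPut D P R c v ch -> pending (ex n.+1) c = Some v.
Proof.
by move=> ln; have := step_at n; rewrite ln => st; inversion st; rewrite /= /upd eqxx.
Qed.

Lemma put_requires_idle c v ch n :
  lab n = @LPut D P R c v ch -> pending (ex n) c = None.
Proof. by move=> ln; have := step_at n; rewrite ln => st; inversion st. Qed.

Lemma put_ts_gt_dtw c v n :
  lab n = @LPut D P R c v DepW -> ~~ tsle (vts v) (dtw (ex n) c).
Proof.
by move=> ln; have := step_at n; rewrite ln => st; inversion st; subst; exact: hlc_update_gt_dep.
Qed.

(* Only the reply clears [pending], and it raises [dt_w] above the version's
   timestamp; [dt_w] never decreases. *)
Lemma pending_or_acknowledged c w m n :
  pending (ex m) c = Some w -> m <= n ->
  pending (ex n) c = Some w \/ tsle (vts w) (dtw (ex n) c).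
Proof.
move=> pm /subnK <-; elim: (n - m) => [|j IH]; first by left.
rewrite addSn; have := step_at (j + m) => st.
inversion st; subst => //=; rewrite /upd; case: eqP => [?|_] //; subst.
- by case: IH => [|]; [congruence | right].
- right; case: IH => [|le_w].
  + move=> pw; have [<-] : Some v = Some w by congruence.
    exact: tsle_maxr.
  + exact: tsle_trans le_w (tsle_maxl _ _).
Qed.

End Execution.

Theorem mainTheorem4 (D P R : nat) (part : nat -> 'I_P)
  (ex : nat -> state D P R) (lab : nat -> label D P R)
  (c : nat) (k : nat) (p : 'I_P) (O : version D) (t : nat) :
  execution part ex lab ->
  part k = p -> vkey O = k ->
  lab t = @LPut D P R c O DepW ->
  forall (s : server D P R) (t' : nat),
    O \in CommittedWrites ex s k t' ->
    forall (c' : nat) (n : nat) (w : version D),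
      t' <= n -> ReadsAt lab c' s k n w ->
      ClientWrites lab c k t w -> w <> O -> False.
Proof.
move=> exec _ kO lt s t' + c' n w t'n read [n0 [ch [n0t [ln0 _]]]] wO.
rewrite mem_filter => /andP[_ Ot'].
have le_O_w : tsle (vts O) (vts w).
  exact: (read_latest exec read (chain_monotone exec t'n Ot') kO).
have n0_lt_t : n0 < t.
  by rewrite ltn_neqAle n0t andbT; apply/eqP => n0E; apply: wO; congruence.
have [|le_w_dtw] := pending_or_acknowledged exec (put_pending exec ln0) n0_lt_t.
  by rewrite (put_requires_idle exec lt).
by move/negP: (put_ts_gt_dtw exec lt); apply; exact: tsle_trans le_O_w le_w_dtw.
Qed.
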